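(* Every 1-consistent randomized algorithm with advice for online integral metric matching must be at least $\Omega(2^N)$-robust in expectation against an adversary.
   Context: Online integral metric matching: on a metric space a set of $N$ servers is given offline; $N$ requests arrive one at a time, each irrevocably matched upon arrival to a distinct unmatched server at cost equal to their distance; total cost is the sum. The algorithm may use randomness and receives a prediction (advice) of arbitrary form about the request sequence, which may be incorrect. Against an adversary, the requests and their order are chosen by an adversary knowing the algorithm. An algorithm is $1$-consistent if its expected cost equals the optimal offline matching cost whenever the advice is correct; it is $c$-robust in expectation if its expected cost is at most $c$ times the optimal cost for every advice, including incorrect advice. *)

From HB Require Import structures.
From mathcomp Require Import all_boot all_order all_algebra all_fingroup.
From mathcomp Require Import all_classical all_reals.
From mathcomp Require Import ereal topology normedtype sequences measure
  lebesgue_measure lebesgue_integral probability.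

Set Implicit Arguments.
Unset Strict Implicit.
Unset Printing Implicit Defensive.

Import Order.TTheory GRing.Theory Num.Theory.
Local Open Scope ring_scope.

Definition is_metric (R : realType) (T : Type) (d : T -> T -> R) : Prop :=
  (forall x y, 0 <= d x y) /\
  (forall x y, d x y = 0 <-> x = y) /\
  (forall x y, d x y = d y x) /\
  (forall x y z, d x z <= d x y + d y z).

(* A deterministic online decision rule f maps the prefix of requests seen so
   far (including the current one) to a server index. *)
Definition online_matching (T : Type) (N : nat) (f : seq T -> 'I_N)
  (r : N.-tuple T) : 'I_N -> 'I_N :=
  fun i => f (take i.+1 r).

Definition matching_cost (R : realType) (T : Type) (N : nat)
  (d : T -> T -> R) (s : 'I_N -> T) (r : N.-tuple T) (m : 'I_N -> 'I_N) : R :=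
  \sum_(i < N) d (tnth r i) (s (m i)).

Definition opt_cost (R : realType) (T : Type) (N : nat)
  (d : T -> T -> R) (s : 'I_N -> T) (r : N.-tuple T) : R :=
  \big[Num.min/matching_cost d s r id]_(p : {perm 'I_N})
     matching_cost d s r (fun i => p i).

(* A randomized algorithm with advice: random seed w : Omega, advice a : Adv,
   online rule A w a. Validity: always an (irrevocable) matching to distinct
   servers. *)
Definition valid_alg (T : Type) (N : nat) (Omega Adv : Type)
  (A : Omega -> Adv -> seq T -> 'I_N) : Prop :=
  forall w a (r : N.-tuple T), injective (online_matching (A w a) r).

(* the cost is a random variable (so that its expectation makes sense) *)
Definition measurable_alg (R : realType) (T : Type) (N : nat)
  (d : T -> T -> R) (s : 'I_N -> T) (dm : measure_display)
  (Omega : measurableType dm) (Adv : Type)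
  (A : Omega -> Adv -> seq T -> 'I_N) : Prop :=
  forall a (r : N.-tuple T),
    measurable_fun setT
      (fun w => matching_cost d s r (online_matching (A w a) r)).

Definition exp_cost (R : realType) (T : Type) (N : nat)
  (d : T -> T -> R) (s : 'I_N -> T) (dm : measure_display)
  (Omega : measurableType dm) (P : probability Omega R) (Adv : Type)
  (A : Omega -> Adv -> seq T -> 'I_N) (r : N.-tuple T) (a : Adv) : \bar R :=
  (\int[P]_w (matching_cost d s r (online_matching (A w a) r))%:E)%E.

Definition one_consistent (R : realType) (T : Type) (N : nat)
  (d : T -> T -> R) (s : 'I_N -> T) (dm : measure_display)
  (Omega : measurableType dm) (P : probability Omega R) (Adv : Type)
  (adv : N.-tuple T -> Adv) (A : Omega -> Adv -> seq T -> 'I_N) : Prop :=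
  forall r : N.-tuple T, exp_cost d s P A r (adv r) = (opt_cost d s r)%:E.

Definition robust (R : realType) (T : Type) (N : nat)
  (d : T -> T -> R) (s : 'I_N -> T) (dm : measure_display)
  (Omega : measurableType dm) (P : probability Omega R) (Adv : Type)
  (A : Omega -> Adv -> seq T -> 'I_N) (rho : R) : Prop :=
  forall (r : N.-tuple T) (a : Adv),
    (exp_cost d s P A r a <= (rho * opt_cost d s r)%:E)%E.

From HB Require Import structures.
From mathcomp Require Import all_boot all_order all_algebra all_fingroup.
From mathcomp Require Import all_classical all_reals.
From mathcomp Require Import ereal topology normedtype sequences measure
  lebesgue_measure lebesgue_integral probability.
From mathcomp Require Import measurable_realfun.
From mathcomp Require Import zify lra.

(* Servers sit at the points 1..N of a metric on nat in which 0 and 1 are at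
   distance e = 2^-N and all other distinct points at distance 1.  Two request
   sequences start at 0 and then cover every server point except 2, resp.
   except 1; their optima are at most 1, resp. at most e.  The first request
   is the same, so the algorithm, run with the advice for the first sequence,
   makes the same random first move in both.  Taking server 1 first costs e
   and later pushes request 1 onto a far server; any other first move costs 1
   in both sequences.  Hence cost_2 + e * cost_1 >= 1 + e pointwise, and in
   expectation 1-consistency (E cost_2 = OPT_2 <= 1) forces E cost_1 >= 1,
   while robustness gives E cost_1 <= rho * e, so rho >= 1/e = 2^N. *)

Set Implicit Arguments.
Unset Strict Implicit.
Unset Printing Implicit Defensive.

Import Order.TTheory GRing.Theory Num.Theory.
Local Open Scope ring_scope.

Section MatchingCost.
Variables (R : realType) (T : Type) (N : nat) (d : T -> T -> R) (s : 'I_N -> T).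
Hypothesis d_ge0 : forall x y, 0 <= d x y.

Lemma matching_cost_ge0 (r : N.-tuple T) (m : 'I_N -> 'I_N) :
  0 <= matching_cost d s r m.
Proof. by apply: sumr_ge0 => i _; exact: d_ge0. Qed.

Lemma matching_cost_ge_term (r : N.-tuple T) (m : 'I_N -> 'I_N) (i : 'I_N) :
  d (tnth r i) (s (m i)) <= matching_cost d s r m.
Proof.
rewrite /matching_cost (bigD1 i) //= lerDl.
by apply: sumr_ge0 => j _; exact: d_ge0.
Qed.

Lemma matching_cost_ge_pair (r : N.-tuple T) (m : 'I_N -> 'I_N) (i j : 'I_N) :
  i != j ->
  d (tnth r i) (s (m i)) + d (tnth r j) (s (m j)) <= matching_cost d s r m.
Proof.
move=> ij; rewrite /matching_cost (bigD1 i) //= (bigD1 j) 1?eq_sym //= addrA lerDl.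
by apply: sumr_ge0 => k _; exact: d_ge0.
Qed.

Lemma opt_cost_ge0 (r : N.-tuple T) : 0 <= opt_cost d s r.
Proof.
by apply: le_bigmin => [|p _]; exact: matching_cost_ge0.
Qed.

Lemma opt_cost_le (r : N.-tuple T) (p : {perm 'I_N}) :
  opt_cost d s r <= matching_cost d s r (fun i => p i).
Proof. exact: bigmin_le. Qed.

End MatchingCost.

Lemma online_matching_ord0 (T : Type) (n : nat) (f : seq T -> 'I_n.+1)
  (r : n.+1.-tuple T) :
  online_matching f r ord0 = f [:: tnth r ord0].
Proof. by case: r => -[|x t] ? //; rewrite /online_matching /= take0. Qed.

Lemma cst_le_integralDZ (R : realType) (dm : measure_display)
  (Omega : measurableType dm) (P : probability Omega R)
  (X Y : Omega -> R) (c e : R) :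
  measurable_fun setT X -> measurable_fun setT Y ->
  (forall w, 0 <= X w) -> (forall w, 0 <= Y w) -> 0 <= c -> 0 <= e ->
  (forall w, c <= X w + e * Y w) ->
  (c%:E <= \int[P]_w (X w)%:E + e%:E * \int[P]_w (Y w)%:E)%E.
Proof.
move=> mX mY X0 Y0 c0 e0 cXY.
have mEX : measurable_fun setT (fun w => (X w)%:E) by exact/measurable_EFinP.
have mEY : measurable_fun setT (fun w => (Y w)%:E) by exact/measurable_EFinP.
rewrite -ge0_integralZl //; last by move=> w _; rewrite lee_fin.
rewrite -ge0_integralD //; last 3 first.
- by move=> w _; rewrite lee_fin.
- by move=> w _; rewrite -EFinM lee_fin mulr_ge0.
- exact: emeasurable_funM.
rewrite -[c%:E]mule1 -(probability_setT P) -integral_cst //.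
apply: ge0_le_integral => //.
- by apply: emeasurable_funD => //; exact: emeasurable_funM.
- by move=> w _; rewrite /= -EFinM -EFinD lee_fin.
Qed.

Section PinchedMetric.
Variables (R : realType) (e : R).

Definition pinched_dist (x y : nat) : R :=
  if x == y then 0 else if (x + y == 1)%N then e else 1.

Lemma pinched_dist_ge0 : 0 <= e -> forall x y, 0 <= pinched_dist x y.
Proof.
by move=> e_ge0 x y; rewrite /pinched_dist; case: eqP => // _; case: eqP.
Qed.

Lemma pinched_dist_far x y : (x < 2)%N -> (2 <= y)%N -> pinched_dist x y = 1.
Proof. by move=> x2 y2; rewrite /pinched_dist ifF ?ifF //; apply/eqP; lia. Qed.

Lemma pinched_dist_metric : 0 < e <= 1 -> is_metric pinched_dist.
Proof.
move=> /andP[e_gt0 e_le1]; have e_ge0 := ltW e_gt0.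
split; first exact: pinched_dist_ge0.
split.
  move=> x y; rewrite /pinched_dist; split=> [|->]; last by rewrite eqxx.
  by case: eqP => // _; case: eqP => _ /eqP; rewrite ?gt_eqF ?oner_eq0.
split; first by move=> x y; rewrite /pinched_dist eq_sym addnC.
move=> x y z.
have [<-|xz] := eqVneq x z.
  by rewrite {1}/pinched_dist eqxx addr_ge0 ?pinched_dist_ge0.
rewrite /pinched_dist (negPf xz).
have [<-|_] := eqVneq x y; first by rewrite (negPf xz) add0r.
have [<-|_] := eqVneq y z; first by rewrite addr0.
case: (x + y =P 1)%N => xy1; case: (y + z =P 1)%N => yz1.
- by move/eqP: xz; lia.
all: by case: ifP => _; lra.
Qed.

End PinchedMetric.

Section HardInstance.
Variables (R : realType) (n : nat) (e : R).

Local Notation N := n.+2.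
Local Notation d := (pinched_dist e).

Definition server_point (i : 'I_N) : nat := i.+1.

Lemma server_point_ge2 (j : 'I_N) : j != ord0 -> (2 <= server_point j)%N.
Proof. by case: j => -[]. Qed.

Definition requests_skip (k : nat) : N.-tuple nat :=
  [tuple if i == 0%N :> nat then 0%N else if (i < k)%N then val i else i.+1
   | i < N].

Lemma requests_skip_tail k (i : 'I_N) :
  (0 < k <= i)%N -> tnth (requests_skip k) i = i.+1.
Proof. by move=> /andP[k0 ki]; rewrite tnth_mktuple ifF ?ltnNge ?ki //; lia. Qed.

Let ord_1 : 'I_N := lift ord0 ord0.

Lemma opt_cost_skip2 : opt_cost d server_point (requests_skip 2) <= 1.
Proof.
apply: le_trans (opt_cost_le _ _ _ (tperm ord0 ord_1)) _.
rewrite /matching_cost (bigD1 ord0) // (bigD1 ord_1) //= big1 => [|i /andP[i0 i1]].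
  by rewrite tpermL tpermR !tnth_mktuple /pinched_dist /=; lra.
have i2 : (2 <= i)%N by case: i i0 i1 => -[|[|j]].
by rewrite tpermD 1?eq_sym // requests_skip_tail ?i2 // /pinched_dist eqxx.
Qed.

Lemma opt_cost_skip1 : opt_cost d server_point (requests_skip 1) <= e.
Proof.
apply: le_trans (opt_cost_le _ _ _ 1%g) _.
rewrite /matching_cost (bigD1 ord0) //= big1 => [|i i0].
  by rewrite perm1 tnth_mktuple /pinched_dist /= addr0.
have i1 : (1 <= i)%N by case: i i0 => -[|j].
by rewrite perm1 requests_skip_tail ?i1 // /pinched_dist eqxx.
Qed.

Lemma online_cost_tradeoff (f : seq nat -> 'I_N) : 0 <= e ->
  injective (online_matching f (requests_skip 2)) ->
  1 + e <= matching_cost d server_point (requests_skip 2)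
             (online_matching f (requests_skip 2))
           + e * matching_cost d server_point (requests_skip 1)
             (online_matching f (requests_skip 1)).
Proof.
move=> e_ge0 inj_f; have d_ge0 := pinched_dist_ge0 e_ge0.
set m2 := online_matching f (requests_skip 2).
set m1 := online_matching f (requests_skip 1).
have m_ord0 : m1 ord0 = m2 ord0.
  by rewrite /m1 /m2 !online_matching_ord0 !tnth_mktuple.
have cost1_ge0 := matching_cost_ge0 server_point d_ge0 (requests_skip 1) m1.
have [m0|m0] := eqVneq (m2 ord0) ord0.
  have m_ord_1 : m2 ord_1 != ord0 by rewrite -m0 (inj_eq inj_f).
  have d_near : d (tnth (requests_skip 2) ord0) (server_point ord0) = e.
    by rewrite tnth_mktuple.
  have d_far : d (tnth (requests_skip 2) ord_1) (server_point (m2 ord_1)) = 1.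
    by rewrite tnth_mktuple pinched_dist_far ?server_point_ge2.
  have := matching_cost_ge_pair server_point d_ge0 (requests_skip 2) m2
    (isT : ord0 != ord_1).
  rewrite m0 d_near d_far; nra.
have := matching_cost_ge_term server_point d_ge0 (requests_skip 2) m2 ord0.
have := matching_cost_ge_term server_point d_ge0 (requests_skip 1) m1 ord0.
rewrite m_ord0 !tnth_mktuple pinched_dist_far ?server_point_ge2 //; nra.
Qed.

Lemma consistent_robust_ge_inv (dm : measure_display) (Omega : measurableType dm)
  (P : probability Omega R) (Adv : Type) (adv : N.-tuple nat -> Adv)
  (A : Omega -> Adv -> seq nat -> 'I_N) (rho : R) : 0 < e ->
  valid_alg A -> measurable_alg d server_point A ->
  one_consistent d server_point P adv A -> robust d server_point P A rho ->
  e^-1 <= rho.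
Proof.
move=> e_gt0 validA measA consA robA; have e_ge0 := ltW e_gt0.
have d_ge0 := pinched_dist_ge0 e_ge0.
pose a := adv (requests_skip 2).
pose cost k w := matching_cost d server_point (requests_skip k)
  (online_matching (A w a) (requests_skip k)).
have E_lb : ((1 + e)%:E <=
    \int[P]_w (cost 2 w)%:E + e%:E * \int[P]_w (cost 1 w)%:E)%E.
  apply: cst_le_integralDZ => //; try exact: measA.
  - by move=> w; exact: matching_cost_ge0.
  - by move=> w; exact: matching_cost_ge0.
  - by rewrite addr_ge0.
  - by move=> w; apply: online_cost_tradeoff => //; exact: validA.
have E_cost2 : (\int[P]_w (cost 2 w)%:E =
    (opt_cost d server_point (requests_skip 2))%:E)%E.
  exact: consA.
have E_cost1 : (\int[P]_w (cost 1 w)%:E <=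
    (rho * opt_cost d server_point (requests_skip 1))%:E)%E.
  exact: robA.
have opt1_ge0 := opt_cost_ge0 server_point d_ge0 (requests_skip 1).
have opt1_le := opt_cost_skip1.
have opt2_le1 := opt_cost_skip2.
set opt1 := opt_cost d server_point (requests_skip 1) in E_cost1 opt1_ge0 opt1_le.
set opt2 := opt_cost d server_point (requests_skip 2) in E_cost2 opt2_le1.
clearbody opt1 opt2.
have lb : 1 + e <= opt2 + e * (rho * opt1).
  rewrite -lee_fin; apply: le_trans E_lb _.
  by rewrite E_cost2 EFinD EFinM leeD2l // lee_wpmul2l // lee_fin.
have rho_opt1 : 1 <= rho * opt1 by rewrite -(ler_pM2l e_gt0) mulr1; lra.
have rho_gt0 : 0 < rho.
  by rewrite ltNge; apply/negP => /mulr_le0_ge0/(_ opt1_ge0); lra.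
by rewrite -div1r ler_pdivrMr //; apply: le_trans rho_opt1 _; rewrite ler_pM2l.
Qed.

End HardInstance.

Theorem mainTheorem6 (R : realType) :
  exists c : R, 0 < c /\
  exists N0 : nat, forall N : nat, (N0 <= N)%N ->
  exists (T : Type) (d : T -> T -> R) (s : 'I_N -> T),
    is_metric d /\
    forall (dm : measure_display) (Omega : measurableType dm)
      (P : probability Omega R) (Adv : Type) (adv : N.-tuple T -> Adv)
      (A : Omega -> Adv -> seq T -> 'I_N) (rho : R),
      valid_alg A ->
      measurable_alg d s A ->
      one_consistent d s P adv A ->
      robust d s P A rho ->
      c * 2 ^+ N <= rho.
Proof.
exists 1; split; first exact: ltr01.
exists 2%N => -[|[|n]] // _.
have pow_gt0 : 0 < 2 ^+ n.+2 :> R by rewrite exprn_gt0.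
pose e : R := (2 ^+ n.+2)^-1.
have e_gt0 : 0 < e by rewrite invr_gt0.
have e_le1 : e <= 1 by rewrite invf_le1 // exprn_ege1 // ler1n.
exists nat, (pinched_dist e), (@server_point n); split.
  by apply: pinched_dist_metric; rewrite e_gt0 e_le1.
move=> dm Omega P Adv adv A rho validA measA consA robA.
by rewrite mul1r -[2 ^+ _]invrK; exact: consistent_robust_ge_inv consA robA.
Qed.
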